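(* Modularity is not monotonic: there exist a graph $G=(V,E)$, a clustering $C$ of $G$, and a $C$-consistent improvement $G'=(V,E')$ of $G$ (with both modularities defined) such that $Q_{\mathrm{mod}}(G',C)<Q_{\mathrm{mod}}(G,C)$.
   Context: A (symmetric weighted) graph is a pair $G=(V,E)$ of a finite set $V$ and $E:V\times V\to\mathbb{R}_{\ge 0}$ symmetric; self loops allowed. A clustering is a partition of $V$ into nonempty disjoint clusters; write $i\sim_C j$ if $i,j$ lie in the same cluster of $C$. For $c\subseteq V$, $v_c=\sum_{i\in c}\sum_{j\in V}E(i,j)$ and $w_c=\sum_{i,j\in c}E(i,j)$. Modularity: $Q_{\mathrm{mod}}(G,C)=\sum_{c\in C}\left(\frac{w_c}{v_V}-\left(\frac{v_c}{v_V}\right)^2\right)$ (defined when $v_V>0$). A graph $G'=(V,E')$ is a $C$-consistent improvement of $G=(V,E)$ if $E'(i,j)\ge E(i,j)$ whenever $i\sim_C j$ and $E'(i,j)\le E(i,j)$ whenever $i\not\sim_C j$. *)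

From mathcomp Require Import all_boot all_order all_algebra.
Set Implicit Arguments. Unset Strict Implicit. Unset Printing Implicit Defensive.
Import Order.TTheory GRing.Theory Num.Theory.
Local Open Scope ring_scope.

Definition is_graph (R : realFieldType) (V : finType) (E : V -> V -> R) : Prop :=
  (forall i j, E i j = E j i) /\ (forall i j, 0 <= E i j).

(* A clustering: a partition of V into nonempty disjoint clusters
   (finset's [partition] excludes the empty block). *)
Definition is_clustering (V : finType) (C : {set {set V}}) : bool :=
  partition C [set: V].

Definition same_cluster (V : finType) (C : {set {set V}}) (i j : V) : bool :=
  [exists c in C, (i \in c) && (j \in c)].

Definition vol (R : realFieldType) (V : finType) (E : V -> V -> R) (c : {set V}) : R :=
  \sum_(i in c) \sum_(j : V) E i j.

Definition wgt (R : realFieldType) (V : finType) (E : V -> V -> R) (c : {set V}) : R :=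
  \sum_(i in c) \sum_(j in c) E i j.

Definition Qmod (R : realFieldType) (V : finType) (E : V -> V -> R)
    (C : {set {set V}}) : R :=
  \sum_(c in C) (wgt E c / vol E [set: V] - (vol E c / vol E [set: V]) ^+ 2).

Definition consistent_improvement (R : realFieldType) (V : finType)
    (C : {set {set V}}) (E E' : V -> V -> R) : Prop :=
  forall i j, (same_cluster C i j -> E i j <= E' i j) /\
              (~~ same_cluster C i j -> E' i j <= E i j).

(* Take a graph whose only edges are self loops, with weights d_i, clustered
   into singletons.  Then w_c = v_c for every cluster and the modularity is
   1 - (sum_i d_i^2) / (sum_i d_i)^2, which decreases as the weights become
   more unbalanced.  Raising one loop weight is a consistent improvement
   (it lies inside a cluster), yet on two vertices it takes the weights from
   (1, 1) to (3, 1) and the modularity from 1/2 down to 3/8. *)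

From mathcomp Require Import all_boot all_order all_algebra.
From mathcomp Require Import lra.
Set Implicit Arguments. Unset Strict Implicit. Unset Printing Implicit Defensive.
Import Order.TTheory GRing.Theory Num.Theory.
Local Open Scope ring_scope.

Definition singletons (V : finType) : {set {set V}} := [set [set x] | x : V].

Lemma singletons_clustering (V : finType) : is_clustering (singletons V).
Proof.
apply/and3P; split.
- apply/eqP/setP => x; rewrite inE; apply/bigcupP.
  by exists [set x]; [exact: imset_f | rewrite inE].
- apply/trivIsetP => _ _ /imsetP[x _ ->] /imsetP[y _ ->] neq_xy.
  by rewrite disjoints1 inE; apply: contraNneq neq_xy => ->.
- by apply/imsetP => -[x _ /setP/(_ x)]; rewrite !inE eqxx.
Qed.

Lemma same_cluster_singletons (V : finType) (i j : V) :
  same_cluster (singletons V) i j = (i == j).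
Proof.
apply/existsP/eqP => [[_ /andP[/imsetP[x _ ->]]] | <-].
  by rewrite !inE => /andP[/eqP-> /eqP->].
by exists [set i]; rewrite imset_f // inE eqxx.
Qed.

Section DiagonalGraph.
Variables (R : realFieldType) (V : finType).

Definition diag_graph (d : V -> R) (i j : V) : R := if i == j then d i else 0.

Lemma diag_graph_is_graph d : (forall i, 0 <= d i) -> is_graph (diag_graph d).
Proof.
move=> d_ge0; split => i j; rewrite /diag_graph.
  by case: eqVneq => [->|]; rewrite ?eqxx // eq_sym => /negPf->.
by case: eqP => // _; exact: d_ge0.
Qed.

Lemma diag_graph_consistent_improvement d d' : (forall i, d i <= d' i) ->
  consistent_improvement (singletons V) (diag_graph d) (diag_graph d').
Proof.
move=> le_dd' i j; rewrite same_cluster_singletons /diag_graph.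
by case: eqP => _; split => // _; exact: le_dd'.
Qed.

Lemma vol_diag_graph d c : vol (diag_graph d) c = \sum_(i in c) d i.
Proof.
apply: eq_bigr => i _; rewrite (bigD1 i) //= big1 => [|j /negPf].
  by rewrite /diag_graph eqxx addr0.
by rewrite /diag_graph eq_sym => ->.
Qed.

Lemma vol_setT_diag_graph d : vol (diag_graph d) [set: V] = \sum_i d i.
Proof. by rewrite vol_diag_graph; apply: eq_bigl => i; rewrite inE. Qed.

Lemma wgt_diag_graph d c : wgt (diag_graph d) c = \sum_(i in c) d i.
Proof.
apply: eq_bigr => i ci; rewrite (bigD1 i) //= big1 => [|j /andP[_ /negPf]].
  by rewrite /diag_graph eqxx addr0.
by rewrite /diag_graph eq_sym => ->.
Qed.

Lemma Qmod_diag_graph_singletons d : \sum_i d i != 0 ->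
  Qmod (diag_graph d) (singletons V) = 1 - (\sum_i d i ^+ 2) / (\sum_i d i) ^+ 2.
Proof.
move=> D_neq0; rewrite /Qmod big_imset /=; last by move=> x y _ _; apply: set1_inj.
under eq_bigr do rewrite wgt_diag_graph vol_setT_diag_graph vol_diag_graph !big_set1.
rewrite sumrB -mulr_suml divff //; congr (_ - _).
by rewrite mulr_suml; apply: eq_bigr => i _; rewrite expr_div_n.
Qed.

End DiagonalGraph.

Theorem theorem3 (R : realFieldType) :
  exists (V : finType) (E E' : V -> V -> R) (C : {set {set V}}),
    is_graph E /\ is_graph E' /\ is_clustering C /\
    consistent_improvement C E E' /\
    0 < vol E [set: V] /\ 0 < vol E' [set: V] /\
    Qmod E' C < Qmod E C.
Proof.
pose d (b : bool) : R := 1; pose d' (b : bool) : R := if b then 3 else 1.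
have d_ge0 b : 0 <= d b by rewrite /d.
have d'_ge0 b : 0 <= d' b by case: b; rewrite /d'.
have le_dd' b : d b <= d' b by case: b; rewrite /d /d' //=; lra.
have sum_d : \sum_b d b = 2 by rewrite big_bool.
have sum_d' : \sum_b d' b = 4 by rewrite big_bool /=; lra.
exists bool, (diag_graph d), (diag_graph d'), (singletons bool).
rewrite !vol_setT_diag_graph !Qmod_diag_graph_singletons ?sum_d ?sum_d' ?pnatr_eq0 //.
split; first exact: diag_graph_is_graph d_ge0.
split; first exact: diag_graph_is_graph d'_ge0.
split; first exact: singletons_clustering.
split; first exact: diag_graph_consistent_improvement le_dd'.
by rewrite !big_bool /d /d' /=; do !split; lra.
Qed.
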